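(* Assume the standing hypotheses (H). Then $d:=\sup\{\sqrt{x_1^2+x_2^2}:\ \mathbf{x}\in\operatorname{Supp}\rho\}<\infty$.
   Context: Standing hypotheses (H): $K\subset\mathbb{R}^3$ is a bounded axisymmetric domain (invariant under rotations about the $x_3$-axis) satisfying the no-trapping condition (whenever $(x,y,z)\notin K$, the half line $(x,y,z)+t(x,y,0)$, $t\ge0$, lies in $\mathbb{R}^3\setminus K$). $f:[0,\infty)\to[0,\infty)$ satisfies (F1) non-negative, continuous, strictly increasing for $s>0$; (F2) $\lim_{s\to0}f(s)s^{-4/3}=0$, $\lim_{s\to\infty}f(s)s^{-4/3}=\infty$; (F3) $\liminf_{s\to\infty}f(s)s^{-\gamma}>0$ for some $\gamma>4/3$; (F4) $f\in C^1(0,\infty)$ and $\liminf_{s\to0}f'(s)s^{-\mu}>0$ for some $\mu>0$. $A(s)=s\int_0^s\frac{f(t)}{t^2}dt$. For $q>3$, $\rho_K\in L^q(K)$ is non-negative and axisymmetric and $\Phi_K(\mathbf{x})=\int_K\frac{\rho_K(\mathbf{y})}{|\mathbf{x}-\mathbf{y}|}d\mathbf{y}$. $M>0$; $\Omega\ge1$ is a constant. For $\rho$ on $\mathbb{R}^3\setminus K$, $B\rho(\mathbf{x})=\int_{\mathbb{R}^3\setminus K}\frac{\rho(\mathbf{y})}{|\mathbf{x}-\mathbf{y}|}d\mathbf{y}$. $\rho:\mathbb{R}^3\setminus K\to[0,\infty)$ is bounded and continuous with $\int\rho=M$, and there is a constant $\lambda$ such that $A'(\rho)-B\rho-\frac12\Omega^2r^2-\Phi_K=\lambda$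 on $\{\rho>0\}$, where $r=\sqrt{x_1^2+x_2^2}$. *)

From HB Require Import structures.
From mathcomp Require Import all_boot all_order all_algebra.
From mathcomp Require Import all_classical all_reals all_analysis.
Set Implicit Arguments. Unset Strict Implicit. Unset Printing Implicit Defensive.
Import Order.TTheory GRing.Theory Num.Theory.
Import numFieldNormedType.Exports.
Local Open Scope classical_set_scope.
Local Open Scope ring_scope.

Definition pt (R : realType) := (R * R * R)%type.

Section defs.
Variable R : realType.

Definition leb3 := ((@lebesgue_measure R \x @lebesgue_measure R) \x @lebesgue_measure R)%E.

Definition dist3 (x y : pt R) : R :=
  Num.sqrt ((x.1.1 - y.1.1) ^+ 2 + (x.1.2 - y.1.2) ^+ 2 + (x.2 - y.2) ^+ 2).

Definition rcyl (x : pt R) : R := Num.sqrt (x.1.1 ^+ 2 + x.1.2 ^+ 2).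

Definition rotz (th : R) (x : pt R) : pt R :=
  ((cos th * x.1.1 - sin th * x.1.2, sin th * x.1.1 + cos th * x.1.2), x.2).

Definition bounded3 (K : set (pt R)) : Prop :=
  exists C : R, forall x, K x -> dist3 x ((0, 0), 0) <= C.

Definition domain3 (K : set (pt R)) : Prop := open K /\ connected K.

Definition axisym_set (K : set (pt R)) : Prop :=
  forall th x, K x <-> K (rotz th x).

Definition axisym_fun (D : set (pt R)) (g : pt R -> R) : Prop :=
  forall th x, D x -> g (rotz th x) = g x.

Definition no_trapping (K : set (pt R)) : Prop :=
  forall x : pt R, ~ K x -> forall t : R, 0 <= t ->
    ~ K ((x.1.1 + t * x.1.1, x.1.2 + t * x.1.2), x.2).

Definition Lq_on (D : set (pt R)) (q : R) (g : pt R -> R) : Prop :=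
  measurable_fun D g /\
  (\int[leb3]_(x in D) ((`|g x| `^ q)%:E) < +oo)%E.

Definition mass3 (D : set (pt R)) (g : pt R -> R) : \bar R :=
  (\int[leb3]_(x in D) ((g x)%:E))%E.

Definition newton (D : set (pt R)) (g : pt R -> R) (x : pt R) : R :=
  fine (\int[leb3]_(y in D) ((g y / dist3 x y)%:E))%E.

Definition Icc0 (s : R) : set R := `[0, s].

Definition Afun (f : R -> R) (s : R) : R :=
  s * fine (\int[@lebesgue_measure R]_(t in Icc0 s) ((f t / t ^+ 2)%:E))%E.

Definition F1 (f : R -> R) : Prop :=
  (forall s, 0 <= s -> 0 <= f s) /\
  {within `[0, +oo[, continuous f} /\
  (forall s t, 0 < s -> s < t -> f s < f t).

Definition F2 (f : R -> R) : Prop :=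
  (fun s => f s * s `^ (- (4 / 3))) @ 0^'+ --> 0 /\
  (fun s => f s * s `^ (- (4 / 3))) @ +oo --> +oo.

Definition F3 (f : R -> R) : Prop :=
  exists gam : R, 4 / 3 < gam /\
    (0 < limf_einf (fun s => (f s * s `^ (- gam))%:E) (pinfty_nbhs R))%E.

Definition F4 (f : R -> R) : Prop :=
  (forall s : R, 0 < s -> derivable f s 1) /\
  (forall s : R, 0 < s -> derive1 f x @[x --> s] --> derive1 f s) /\
  exists mu : R, 0 < mu /\
    (0 < limf_einf (fun s : R => (derive1 f s * s `^ (- mu))%:E) 0^'+)%E.

End defs.

From HB Require Import structures.
From mathcomp Require Import all_boot all_order all_algebra.
From mathcomp Require Import all_classical all_reals all_analysis.
From mathcomp Require Import measurable_realfun.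
From mathcomp.algebra_tactics Require Import lra.
Import Order.TTheory GRing.Theory Num.Theory.
Import numFieldNormedType.Exports.
Local Open Scope classical_set_scope.
Local Open Scope ring_scope.

(* On the support, (1/2) Omega^2 r^2 = A'(rho) - B rho - Phi_K - lambda <= A'(rho) - lambda,
   because both potentials are nonnegative.  Since rho is bounded, it suffices that A' is
   bounded above on every interval (0, C]: A(s) = s G(s) with G(s) = int_0^s f(t)/t^2 dt, so
   A'(s) = G(s) + f(s)/s, where G is nondecreasing and f(s)/s is bounded near 0 because
   f(s) = o(s^(4/3)).  Hence the support lies in a closed cylinder {r^2 <= E}, and so does its
   closure. *)

Local Notation mu := (@lebesgue_measure _).

Definition Akernel {R : realType} (f : R -> R) (t : R) : R := f t / t ^+ 2.

Definition Aprim {R : realType} (f : R -> R) (s : R) : R :=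
  fine (\int[mu]_(t in `[0%R, s]) (Akernel f t)%:E)%E.

Lemma Afun_mulE (R : realType) (f : R -> R) : Afun f = id * Aprim f.
Proof. by apply/funext => s. Qed.

Section Akernel_properties.
Variables (R : realType) (f : R -> R).
Hypothesis f_ge0 : forall s, 0 <= s -> 0 <= f s.
Hypothesis f_incr : forall s t, 0 < s -> s < t -> f s < f t.
Hypothesis f_derivable : forall s, 0 < s -> derivable f s 1.

Lemma Akernel_ge0 (t : R) : 0 <= t -> 0 <= Akernel f t.
Proof. by move=> t0; rewrite divr_ge0 ?f_ge0 ?sqr_ge0. Qed.

Lemma derivable_Akernel (t : R) : 0 < t -> derivable (Akernel f) t 1.
Proof.
move=> t0; have -> : Akernel f = f * (fun y => (y ^+ 2)^-1) by [].
apply: derivableM; first exact: f_derivable.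
apply: derivableV; first by rewrite expf_neq0 // gt_eqF.
have -> : (fun y : R => y ^+ 2) = id * id by apply/funext => y.
by apply: derivableM; exact: derivable_id.
Qed.

Lemma continuous_Akernel (t : R) : 0 < t -> {for t, continuous (Akernel f)}.
Proof.
by move=> t0; apply: differentiable_continuous; exact/derivable1_diffP/derivable_Akernel.
Qed.

(* Continuous on ]0, u]; the point 0, where the kernel takes a junk value, is split off. *)
Lemma measurable_Akernel (u : R) : 0 <= u -> measurable_fun `[0%R, u] (Akernel f).
Proof.
move=> u0; rewrite -(@setU1itv _ _ _ _ false); last by rewrite bnd_simp.
apply/measurable_funU => //; split.
  move=> _ Y mY; have [Y0|Y0] := pselect (Y (Akernel f 0)).
    rewrite (_ : _ `&` _ = [set 0]) //.
    by apply/seteqP; split => x /=; [case|move=> ->].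
  rewrite (_ : _ `&` _ = set0) //.
  by apply/seteqP; split => x //= [->].
apply: subspace_continuous_measurable_fun => //.
apply: continuous_in_subspaceT => x; rewrite inE /= in_itv /= => /andP[x0 _].
exact: continuous_Akernel.
Qed.

Lemma integral_Akernel_ge0 (D : set R) : D `<=` [set t | 0 <= t] ->
  (0 <= \int[mu]_(t in D) (Akernel f t)%:E)%E.
Proof. by move=> D0; apply: integral_ge0 => t /D0 t0; rewrite lee_fin Akernel_ge0. Qed.

Lemma integral_Akernel_itv_split (a b : R) : 0 < a -> a <= b ->
  (\int[mu]_(t in `[0%R, b]) (Akernel f t)%:E =
   \int[mu]_(t in `[0%R, a]) (Akernel f t)%:E + \int[mu]_(t in `]a, b]) (Akernel f t)%:E)%E.
Proof.
move=> a0 ab.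
have ab_split : `[0%R, b]%classic = `[0%R, a] `|` `]a, b] :> set R.
  by rewrite (@itv_bndbnd_setU _ _ (BLeft 0) (BRight a) (BRight b)) // bnd_simp ltW.
rewrite ab_split; apply: ge0_integral_setU => //.
- rewrite -ab_split; apply/measurable_EFinP.
  exact: measurable_Akernel (le_trans (ltW a0) ab).
- move=> x [] /=; rewrite in_itv /= => /andP[x0 _]; rewrite lee_fin Akernel_ge0 //.
  by rewrite (le_trans (ltW a0)) // ltW.
- apply/disj_setPS => x [] /=; rewrite !in_itv /= => /andP[_ xa] /andP[ax _].
  by move: (lt_le_trans ax xa); rewrite ltxx.
Qed.

(* Away from 0 the kernel is bounded by f b / a^2, by monotonicity of f. *)
Lemma integral_Akernel_oc_lty (a b : R) : 0 < a -> a <= b ->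
  (\int[mu]_(t in `]a, b]) (Akernel f t)%:E < +oo)%E.
Proof.
move=> a0 ab.
have ab0 : `]a, b] `<=` [set t : R | 0 <= t].
  by move=> x /=; rewrite in_itv /= => /andP[ax _]; rewrite (le_trans (ltW a0)) ?ltW.
apply: (@le_lt_trans _ _ (\int[mu]_(t in `]a, b]) (f b / a ^+ 2)%:E)%E); last first.
  rewrite integral_cst //= lebesgue_measure_itv /= lte_fin.
  by case: ifP => _; rewrite ?mule0 -?EFinD -?EFinM ltry.
apply: ge0_le_integral => //.
- by move=> x /ab0 x0; rewrite lee_fin Akernel_ge0.
- have mb : measurable_fun `[0%R, b] (Akernel f).
    exact: measurable_Akernel (le_trans (ltW a0) ab).
  apply/measurable_EFinP; apply: measurable_funS mb => //.
  by move=> x /[dup] /ab0 x0; rewrite /= !in_itv /= x0 => /andP[_ ->].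
- move=> x /=; rewrite in_itv /= => /andP[ax xb]; rewrite lee_fin.
  have x0 := lt_trans a0 ax.
  apply: ler_pM; [exact/f_ge0/ltW | by rewrite invr_ge0 sqr_ge0 | |].
  + by move: xb; rewrite le_eqVlt => /orP[/eqP -> //|/(f_incr _ _ x0)/ltW].
  + by rewrite lef_pV2 ?posrE ?exprn_gt0 // ler_pXn2r ?nnegrE ?ltW.
Qed.

Lemma integral_Akernel_fin_or_infty :
  (forall u : R, 0 < u -> (\int[mu]_(t in `[0%R, u]) (Akernel f t)%:E < +oo)%E) \/
  (forall u : R, 0 < u -> (\int[mu]_(t in `[0%R, u]) (Akernel f t)%:E = +oo)%E).
Proof.
have [fin|notfin] := pselect
  (forall u : R, 0 < u -> (\int[mu]_(t in `[0%R, u]) (Akernel f t)%:E < +oo)%E); [by left|right].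
have [u0 [u00 infty_u0]] : exists u0, 0 < u0 /\
    (\int[mu]_(t in `[0%R, u0]) (Akernel f t)%:E = +oo)%E.
  apply: contra_notP notfin => H u u0; rewrite ltey; apply/negP => /eqP infty_u.
  by apply: H; exists u.
move=> u u_gt0; have [u0u|uu0] := leP u0 u.
  have oc_ge0 : (0 <= \int[mu]_(t in `]u0, u]) (Akernel f t)%:E)%E.
    apply: integral_Akernel_ge0 => x /=; rewrite in_itv /= => /andP[ax _].
    by rewrite (le_trans (ltW u00)) ?ltW.
  rewrite (integral_Akernel_itv_split _ _ u00 u0u) infty_u0 addye //.
  by rewrite gt_eqF // (lt_le_trans ltNy0 oc_ge0).
apply/eqP; rewrite -leye_eq leNgt; apply/negP => fin_u.
move: (lte_add_pinfty fin_u (integral_Akernel_oc_lty _ _ u_gt0 (ltW uu0))).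
by rewrite -(integral_Akernel_itv_split _ _ u_gt0 (ltW uu0)) infty_u0 ltxx.
Qed.

Lemma Aprim_le (s t : R) : 0 < s -> s <= t -> Aprim f s <= Aprim f t.
Proof.
move=> s0 st; rewrite /Aprim.
have [fin|infty] := integral_Akernel_fin_or_infty; last first.
  by rewrite !infty // (lt_le_trans s0).
rewrite (integral_Akernel_itv_split _ _ s0 st).
have cc_ge0 : (0 <= \int[mu]_(x in `[0%R, s]) (Akernel f x)%:E)%E.
  by apply: integral_Akernel_ge0 => x /=; rewrite in_itv /= => /andP[].
have oc_ge0 : (0 <= \int[mu]_(x in `]s, t]) (Akernel f x)%:E)%E.
  apply: integral_Akernel_ge0 => x /=; rewrite in_itv /= => /andP[sx _].
  by rewrite (le_trans (ltW s0)) ?ltW.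
have oc_lty := integral_Akernel_oc_lty _ _ s0 st.
apply: fine_le; last exact: leeDl.
  by rewrite ge0_fin_numE ?fin.
rewrite ge0_fin_numE; [exact: lte_add_pinfty (fin _ s0) oc_lty | exact: adde_ge0].
Qed.

Lemma derive1_Afun_fin (s : R) : 0 < s ->
  (forall u : R, 0 < u -> (\int[mu]_(t in `[0%R, u]) (Akernel f t)%:E < +oo)%E) ->
  derive1 (Afun f) s = f s / s + Aprim f s.
Proof.
move=> s0 fin.
have integrable_Akernel u : 0 < u -> mu.-integrable `[0%R, u] (EFin \o Akernel f).
  move=> u0; apply/integrableP; split.
    by apply/measurable_EFinP; exact: measurable_Akernel (ltW u0).
  rewrite (le_lt_trans _ (fin u u0)) // le_eqVlt; apply/orP; left; apply/eqP.
  apply: eq_integral => x; rewrite inE /= in_itv /= => /andP[x0 _].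
  by rewrite ger0_norm // Akernel_ge0.
have s_lt_s1 : s < s + 1 by rewrite ltrDl ltr01.
have [dG G'] := @continuous_FTC1_closed R (Akernel f) 0 s (s + 1) s_lt_s1
  (integrable_Akernel _ (addr_gt0 s0 ltr01)) s0 (continuous_Akernel _ s0).
rewrite Afun_mulE derive1E deriveM // derive_id -derive1E G' /=.
rewrite -[s *: _]/(s * Akernel f s) -[(Aprim f s)%:A]/(Aprim f s * 1) mulr1.
by rewrite /Akernel expr2 invfM mulrCA !mulrA mulfK ?gt_eqF.
Qed.

(* [fine +oo = 0], so A vanishes identically when the kernel is not integrable at 0. *)
Lemma derive1_Afun_infty (s : R) : 0 < s ->
  (forall u : R, 0 < u -> (\int[mu]_(t in `[0%R, u]) (Akernel f t)%:E = +oo)%E) ->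
  derive1 (Afun f) s = 0.
Proof.
move=> s0 infty; rewrite derive1E (@near_eq_derive _ _ _ _ (cst 0)) ?derive_cst //.
near=> x; have x0 : 0 < x by near: x; exact: lt_nbhsr.
by rewrite /Afun (infty x x0) /= mulr0.
Unshelve. all: by end_near.
Qed.

Hypothesis f_small0 : (fun s => f s * s `^ (- (4 / 3))) @ 0^'+ --> 0.

(* Near 0, f(s) < s^(4/3) <= s; away from 0, f(s)/s <= f(C)/d by monotonicity. *)
Lemma f_div_id_bounded (C : R) : 0 < C ->
  exists D : R, forall s, 0 < s -> s <= C -> f s / s <= D.
Proof.
move=> C0; have [e /= e0 small_e] := @cvgr_lt _ _ _ _ _ _ f_small0 1 ltr01.
pose d := Num.min (e / 2) 1.
have d0 : 0 < d by rewrite lt_min ltr01 andbT divr_gt0.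
have de : d < e by rewrite gt_min ltr_pdivrMr // ltr_pMr // ltr1n orTb.
have d1 : d <= 1 by rewrite ge_min lexx orbT.
exists (Num.max 1 (f C / d)) => s s0 sC; rewrite le_max.
have [sd|ds] := ltP s d.
  have := small_e s; rewrite /ball /= sub0r normrN gtr0_norm //.
  move=> /(_ (lt_trans sd de) s0); rewrite powRN ltr_pdivrMr ?powR_gt0 // mul1r => fs.
  have s43 : s `^ (4 / 3) <= s.
    apply: ge1r_powR; first by rewrite s0 (le_trans (ltW sd)).
    by rewrite ler_pdivlMr // mul1r ler_nat.
  by rewrite ler_pdivrMr // mul1r (le_trans (ltW fs)).
apply/orP; right; apply: ler_pM.
- exact/f_ge0/ltW.
- by rewrite invr_ge0 ltW.
- by move: sC; rewrite le_eqVlt => /orP[/eqP -> //|/(f_incr _ _ s0)/ltW].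
- by rewrite lef_pV2 ?posrE.
Qed.

Lemma derive1_Afun_bounded (C : R) : 0 < C ->
  exists B : R, forall s, 0 < s -> s <= C -> derive1 (Afun f) s <= B.
Proof.
move=> C0; have [D fD] := f_div_id_bounded _ C0.
exists (Num.max 0 (D + Aprim f C)) => s s0 sC; rewrite le_max.
have [fin|infty] := integral_Akernel_fin_or_infty.
  by rewrite derive1_Afun_fin // lerD ?fD ?Aprim_le ?orbT.
by rewrite derive1_Afun_infty ?lexx.
Qed.

End Akernel_properties.

Lemma newton_ge0 {R : realType} {D : set (pt R)} {g : pt R -> R} (x : pt R) :
  (forall y, D y -> 0 <= g y) -> 0 <= newton D g x.
Proof.
move=> g0; apply: fine_ge0; apply: integral_ge0 => y Dy.
by rewrite lee_fin divr_ge0 ?g0 ?sqrtr_ge0.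
Qed.

Lemma rcyl_sqr {R : realType} (x : pt R) : rcyl x ^+ 2 = x.1.1 ^+ 2 + x.1.2 ^+ 2.
Proof. by rewrite sqr_sqrtr // addr_ge0 ?sqr_ge0. Qed.

Lemma closed_cylinder {R : realType} (E : R) : closed [set x : pt R | rcyl x ^+ 2 <= E].
Proof.
have -> : [set x : pt R | rcyl x ^+ 2 <= E] =
    (fun x : pt R => x.1.1 * x.1.1 + x.1.2 * x.1.2) @^-1` [set z | z <= E].
  by apply/seteqP; split => x /=; rewrite rcyl_sqr !expr2.
apply: preimage_closed; last exact: closed_le.
move=> x _.
have x1_cvg : (fun y : pt R => y.1.1) @ x --> x.1.1 := cvg_comp _ _ cvg_fst cvg_fst.
have x2_cvg : (fun y : pt R => y.1.2) @ x --> x.1.2 := cvg_comp _ _ cvg_fst cvg_snd.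
by apply: cvgD; apply: cvgM; first [exact: x1_cvg | exact: x2_cvg].
Qed.

Lemma ereal_sup_rcyl_closure_lty {R : realType} (S : set (pt R)) (E : R) :
  S `<=` [set x | rcyl x ^+ 2 <= E] ->
  (ereal_sup [set (rcyl y)%:E | y in closure S] < +oo)%E.
Proof.
move=> SE; apply: (@le_lt_trans _ _ (1 + E)%:E); last exact: ltry.
apply: ge_ereal_sup => _ [y Sy <-]; rewrite lee_fin.
have /= ry_le : [set x : pt R | rcyl x ^+ 2 <= E] y.
  by rewrite ((closure_id _).1 (closed_cylinder E)); exact: closureS SE y Sy.
by have : 0 <= rcyl y := sqrtr_ge0 _; nra.
Qed.

Theorem mainTheorem11 (R : realType) (K : set (pt R)) (f : R -> R)
    (q : R) (rhoK : pt R -> R) (M Omega : R) (rho : pt R -> R) :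
  bounded3 K -> domain3 K -> axisym_set K -> no_trapping K ->
  F1 f -> F2 f -> F3 f -> F4 f ->
  3 < q -> Lq_on K q rhoK -> (forall x, K x -> 0 <= rhoK x) ->
  axisym_fun K rhoK ->
  0 < M -> 1 <= Omega ->
  (forall x, ~ K x -> 0 <= rho x) ->
  (exists C : R, forall x, ~ K x -> rho x <= C) ->
  {within ~` K, continuous rho} ->
  mass3 (~` K) rho = M%:E ->
  (exists lam : R, forall x, ~ K x -> 0 < rho x ->
     derive1 (Afun f) (rho x) - newton (~` K) rho x
       - 2^-1 * Omega ^+ 2 * rcyl x ^+ 2 - newton K rhoK x = lam) ->
  (ereal_sup [set (rcyl y)%:E | y in closure [set x | ~ K x /\ (0 < rho x)%R]]
     < +oo)%E.
Proof.
move=> _ _ _ _ [f_ge0 [_ f_incr]] [f_small0 _] _ [f_derivable _] _ _ rhoK_ge0 _ _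
  Omega_ge1 rho_ge0 [C rho_leC] _ _ [lam euler_lagrange].
have C1_gt0 : 0 < Num.max C 1 by rewrite lt_max ltr01 orbT.
have rho_le_max x : ~ K x -> rho x <= Num.max C 1 by rewrite le_max => /rho_leC ->.
have [B A'_leB] := @derive1_Afun_bounded _ f f_ge0 f_incr f_derivable f_small0 _ C1_gt0.
apply: (ereal_sup_rcyl_closure_lty _ (2 * (B - lam))) => x [Kx rho_gt0] /=.
have := euler_lagrange x Kx rho_gt0.
have := newton_ge0 x rho_ge0; have := newton_ge0 x rhoK_ge0.
have := A'_leB _ rho_gt0 (rho_le_max x Kx).
have : rcyl x ^+ 2 <= Omega ^+ 2 * rcyl x ^+ 2.
  by rewrite ler_peMl ?sqr_ge0 // expr_ge1 // (le_trans ler01).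
lra.
Qed.
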